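(* Let $U$ be a nonempty open subset of $\mathbb{R}^d$ and $(x_n)_{n\ge1}$ a sequence in $\mathbb{R}^d$. Assume there is a nonempty dyadic cube $\lambda\subseteq U$ such that $\liminf_{j\to\infty}2^{-dj}\#\mathrm{M}((x_n)_{n\ge1};\lambda,j)=0$. Then $(x_n)_{n\ge1}$ is not uniformly eutaxic in $U$.
   Context: Fix a norm $|\cdot|$ on $\mathbb{R}^d$; $\mathcal{L}^d$ is Lebesgue measure. $\mathrm{P}_d$ is the set of real sequences $(r_n)_{n\ge1}$ with $r_{n+1}\le r_n$ for all $n$, $r_n\to0$ and $\sum_n r_n^d=\infty$. A sequence $(x_n)$ in $\mathbb{R}^d$ is uniformly eutaxic in $U$ if for every $(r_n)\in\mathrm{P}_d$, $\mathcal{L}^d$-almost every $x\in U$ satisfies $|x-x_n|<r_n$ for infinitely many $n$. A dyadic cube is a set $\lambda=2^{-j}(k+[0,1)^d)$ with $j\in\mathbb{Z}$, $k\in\mathbb{Z}^d$; its generation is $\langle\lambda\rangle=j$. For a nonempty dyadic cube $\lambda$ and an integer $j\ge0$, $\mathrm{M}((x_n)_{n\ge1};\lambda,j)$ is the set of dyadic cubes $\lambda'\subseteq\lambda$ of generation $\langle\lambda\rangle+j$ such that $x_n\in\lambda'$ for some $n\le2^{d\langle\lambda'\rangle}$. *)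

From Stdlib Require Vectors.Fin.
From Stdlib Require Import Reals Lra Lia ZArith List.
Import ListNotations.
Open Scope R_scope.

Definition pt (d : nat) : Type := Fin.t d -> R.

Definition psub {d} (x y : pt d) : pt d := fun i => x i - y i.
Definition padd {d} (x y : pt d) : pt d := fun i => x i + y i.
Definition pscal {d} (c : R) (x : pt d) : pt d := fun i => c * x i.

Definition is_norm (d : nat) (N : pt d -> R) : Prop :=
  (forall x, 0 <= N x) /\
  (forall x, N x = 0 -> forall i, x i = 0) /\
  (forall c x, N (pscal c x) = Rabs c * N x) /\
  (forall x y, N (padd x y) <= N x + N y).

Fixpoint fprod (d : nat) : (Fin.t d -> R) -> R :=
  match d with
  | O => fun _ => 1
  | S d' => fun f => f Fin.F1 * fprod d' (fun i => f (Fin.FS i))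
  end.

Definition lebesgue_null (d : nat) (A : pt d -> Prop) : Prop :=
  forall eps, 0 < eps ->
    exists a b : nat -> pt d,
      (forall k i, a k i <= b k i) /\
      (forall x, A x -> exists k, forall i, a k i <= x i <= b k i) /\
      (forall n, sum_f_R0 (fun k => fprod d (fun i => b k i - a k i)) n <= eps).

Definition is_open (d : nat) (U : pt d -> Prop) : Prop :=
  forall x, U x -> exists delta, 0 < delta /\
    forall y, (forall i, Rabs (y i - x i) < delta) -> U y.

(* The class P_d (sequences indexed by n >= 1; the value at 0 is irrelevant). *)
Definition in_Pd (d : nat) (r : nat -> R) : Prop :=
  (forall n, (1 <= n)%nat -> r (S n) <= r n) /\
  (forall eps, 0 < eps -> exists N, forall n, (N <= n)%nat -> Rabs (r n) < eps) /\
  (forall M, exists K, M < sum_f_R0 (fun i => r (S i) ^ d) K).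

Definition uniformly_eutaxic (d : nat) (N : pt d -> R) (x : nat -> pt d)
  (U : pt d -> Prop) : Prop :=
  forall r, in_Pd d r ->
    lebesgue_null d (fun y => U y /\
      ~ (forall m, exists n, (m <= n)%nat /\ (1 <= n)%nat /\ N (psub y (x n)) < r n)).

Definition in_cube {d} (j : Z) (k : Fin.t d -> Z) (y : pt d) : Prop :=
  forall i, powerRZ 2 (- j) * IZR (k i) <= y i < powerRZ 2 (- j) * (IZR (k i) + 1).

(* k' indexes an element of M((x_n); lambda, j) where lambda = cube (j0, k). *)
Definition in_M {d} (x : nat -> pt d) (j0 : Z) (k : Fin.t d -> Z) (j : nat)
  (k' : Fin.t d -> Z) : Prop :=
  (forall y, in_cube (j0 + Z.of_nat j) k' y -> in_cube j0 k y) /\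
  exists n, (1 <= n)%nat /\
    INR n <= powerRZ 2 (Z.of_nat d * (j0 + Z.of_nat j)) /\
    in_cube (j0 + Z.of_nat j) k' (x n).

Definition is_card {A : Type} (P : A -> Prop) (c : nat) : Prop :=
  exists l : list A, NoDup l /\ length l = c /\ forall a, P a <-> In a l.

From Stdlib Require Import Reals Lra Lia ZArith List.
From Stdlib Require Import FunctionalExtensionality Classical IndefiniteDescription.
Import ListNotations.
Open Scope R_scope.

(* Pick generations J_0 < J_1 < ... along which the subcubes of generation j_m = j0 + J_m of
   lambda that are hit early are so few that their 3-fold dilates have total volume at most half
   that of the middle half Q of lambda.  Take r_n = c 2^{-j_m} for 2^{d j_(m-1)} < n <= 2^{d j_m},
   with c |v_i| <= |v|; the blocks of indices at least double in length, so sum r_n^d = oo and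
   (r_n) is in P_d.  If |y - x_n| < r_n with n in block m, then x_n, being hit before time
   2^{d j_m}, lies in one of these subcubes, and y in its dilate.  Uniform eutaxy would make the
   points of Q approximated only finitely often a null set; Q would then be covered by a null set
   and boxes of total volume < |Q|, which compactness and a lattice-point count forbid. *)

Definition lsum (l : list R) : R := fold_right Rplus 0 l.

Lemma lsum_app l1 l2 : lsum (l1 ++ l2) = lsum l1 + lsum l2.
Proof. induction l1; simpl; [ring|]. rewrite IHl1; ring. Qed.

Lemma lsum_map_le {A} (f g : A -> R) l : (forall a, In a l -> f a <= g a) ->
  lsum (map f l) <= lsum (map g l).
Proof.
  induction l as [|a l IH]; simpl; intros H; [lra|].
  pose proof (H a (or_introl eq_refl)). pose proof (IH (fun b Hb => H b (or_intror Hb))). lra.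
Qed.

Lemma lsum_map_plus {A} (f g : A -> R) l :
  lsum (map (fun a => f a + g a) l) = lsum (map f l) + lsum (map g l).
Proof. induction l; simpl; [lra|]. rewrite IHl; ring. Qed.

Lemma lsum_map_scal {A} c (f : A -> R) l : lsum (map (fun a => c * f a) l) = c * lsum (map f l).
Proof. induction l; simpl; [lra|]. rewrite IHl; ring. Qed.

Lemma lsum_map_const {A} c (l : list A) : lsum (map (fun _ => c) l) = INR (length l) * c.
Proof. induction l; simpl length; [simpl; ring|]. rewrite S_INR. simpl. rewrite IHl; ring. Qed.

Lemma lsum_map_nonneg {A} (f : A -> R) l : (forall a, In a l -> 0 <= f a) -> 0 <= lsum (map f l).
Proof.
  intro H. replace 0 with (lsum (map (fun _ => 0) l)) at 1 by (rewrite lsum_map_const; ring).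
  apply lsum_map_le; auto.
Qed.

Lemma lsum_map_member_le {A} (f : A -> R) l a : (forall b, In b l -> 0 <= f b) -> In a l ->
  f a <= lsum (map f l).
Proof.
  induction l as [|b l IH]; simpl; intros H Ha; [contradiction|].
  destruct Ha as [<-|Ha].
  - pose proof (lsum_map_nonneg f l (fun c Hc => H c (or_intror Hc))). lra.
  - pose proof (H b (or_introl eq_refl)). pose proof (IH (fun c Hc => H c (or_intror Hc)) Ha). lra.
Qed.

Lemma lsum_flat_map {A B} (f : B -> R) (g : A -> list B) l :
  lsum (map f (flat_map g l)) = lsum (map (fun a => lsum (map f (g a))) l).
Proof. induction l; simpl; [reflexivity|]. rewrite map_app, lsum_app, IHl. reflexivity. Qed.

Lemma lsum_seq_S f a n : lsum (map f (seq a (S n))) = lsum (map f (seq a n)) + f (a + n)%nat.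
Proof. rewrite seq_S, map_app, lsum_app. simpl. ring. Qed.

Lemma sum_f_R0_lsum f n : sum_f_R0 f n = lsum (map f (seq 0 (S n))).
Proof. induction n; [simpl; ring|]. rewrite lsum_seq_S, <- IHn. reflexivity. Qed.

Lemma lsum_geometric a n : lsum (map (fun m => (/2) ^ (m + a)) (seq 0 n)) <= 2 * (/2) ^ a.
Proof.
  assert (E : forall b, lsum (map (fun m => (/2) ^ m) (seq b n)) = 2 * (/2) ^ b - 2 * (/2) ^ (b + n)).
  { induction n; intro b; [rewrite Nat.add_0_r; simpl; ring|].
    simpl. rewrite IHn. replace (b + S n)%nat with (S b + n)%nat by lia. simpl. field. }
  replace (map (fun m => (/2) ^ (m + a)) (seq 0 n)) with (map (fun m => (/2) ^ a * (/2) ^ m) (seq 0 n))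
    by (apply map_ext; intro; rewrite pow_add; ring).
  rewrite lsum_map_scal, E. simpl.
  assert (0 <= (/2) ^ n) by (apply pow_le; lra). assert (0 < (/2) ^ a) by (apply pow_lt; lra). nra.
Qed.

Lemma fprod_mult d f h : fprod d (fun i => f i * h i) = fprod d f * fprod d h.
Proof. revert f h; induction d; simpl; intros; [ring|]. rewrite IHd; ring. Qed.

Lemma fprod_const d c : fprod d (fun _ => c) = c ^ d.
Proof. induction d; simpl; auto. rewrite IHd; ring. Qed.

Lemma fprod_nonneg d f : (forall i, 0 <= f i) -> 0 <= fprod d f.
Proof. revert f; induction d; simpl; intros f H; [lra|]. apply Rmult_le_pos; auto. Qed.

Lemma fprod_le d f h : (forall i, 0 <= f i <= h i) -> fprod d f <= fprod d h.
Proof.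
  revert f h; induction d; simpl; intros f h H; [lra|].
  apply Rmult_le_compat; try apply H; [apply fprod_nonneg; intro; apply H|apply IHd; intro; apply H].
Qed.

Lemma fprod_one d f : (forall i, f i = 1) -> fprod d f = 1.
Proof.
  intro H. replace f with (fun _ : Fin.t d => 1) by (apply functional_extensionality; auto).
  rewrite fprod_const, pow1; auto.
Qed.

Lemma fprod_add_le d l t : (forall i, 0 <= l i) -> 0 <= t <= 1 ->
  fprod d (fun i => l i + t) <= fprod d l + t * (2 ^ d * fprod d (fun i => l i + 1)).
Proof.
  revert l; induction d; simpl; intros l Hl Ht; [lra|].
  specialize (IHd (fun i => l (Fin.FS i)) (fun i => Hl (Fin.FS i)) Ht).
  set (P0 := fprod d (fun i => l (Fin.FS i))) in *.
  set (C := fprod d (fun i => l (Fin.FS i) + 1)) in *.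
  set (Pt := fprod d (fun i => l (Fin.FS i) + t)) in *.
  assert (0 <= P0) by (apply fprod_nonneg; intro; apply Hl).
  assert (P0 <= C) by (apply fprod_le; intro i; pose proof (Hl (Fin.FS i)); lra).
  assert (0 <= Pt) by (apply fprod_nonneg; intro i; pose proof (Hl (Fin.FS i)); lra).
  assert (1 <= 2 ^ d) by (apply pow_R1_Rle; lra).
  pose proof (Hl Fin.F1) as Hl0.
  set (K := 2 ^ d * C) in *.
  assert (C <= K) by (unfold K; nra).
  assert ((l Fin.F1 + t) * Pt <= (l Fin.F1 + t) * (P0 + t * K)) by (apply Rmult_le_compat_l; lra).
  assert (t * P0 <= t * K) by (apply Rmult_le_compat_l; lra).
  assert (t * t * K <= t * K) by (apply Rmult_le_compat_r; nra).
  assert (0 <= l Fin.F1 * t * K) by (apply Rmult_le_pos; nra).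
  replace (2 * 2 ^ d * ((l Fin.F1 + 1) * C)) with (2 * (l Fin.F1 + 1) * K) by (unfold K; ring).
  nra.
Qed.

Definition ncons {d} (g0 : nat) (g : Fin.t d -> nat) : Fin.t (S d) -> nat :=
  fun i => Fin.caseS' i (fun _ => nat) g0 g.

Fixpoint gsum (d M : nat) : ((Fin.t d -> nat) -> R) -> R :=
  match d with
  | O => fun F => F (fun i => Fin.case0 _ i)
  | S d' => fun F => lsum (map (fun g0 => gsum d' M (fun g => F (ncons g0 g))) (seq 0 M))
  end.

Lemma gsum_le d M F G : (forall g, (forall i, (g i < M)%nat) -> F g <= G g) ->
  gsum d M F <= gsum d M G.
Proof.
  revert F G; induction d; simpl; intros F G H.
  - apply H. intro i; exact (Fin.case0 (fun i => (S (Fin.case0 (fun _ => nat) i) <= M)%nat) i).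
  - apply lsum_map_le; intros g0 Hg0. apply in_seq in Hg0. apply IHd. intros g Hg. apply H.
    intro i; pattern i; apply Fin.caseS'; simpl; auto; lia.
Qed.

Lemma gsum_plus d M F G : gsum d M (fun g => F g + G g) = gsum d M F + gsum d M G.
Proof.
  revert F G; induction d; simpl; intros F G; [reflexivity|].
  rewrite <- lsum_map_plus. f_equal. apply map_ext; intro g0. apply IHd.
Qed.

Lemma gsum_scal d M c F : gsum d M (fun g => c * F g) = c * gsum d M F.
Proof.
  revert F; induction d; simpl; intros F; [reflexivity|].
  rewrite <- lsum_map_scal. f_equal. apply map_ext; intro g0. apply IHd.
Qed.

Lemma gsum_lsum {A} d M (F : A -> (Fin.t d -> nat) -> R) l :
  gsum d M (fun g => lsum (map (fun a => F a g) l)) = lsum (map (fun a => gsum d M (F a)) l).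
Proof.
  induction l; simpl.
  - transitivity (gsum d M (fun _ => 0 * 1)); [f_equal; apply functional_extensionality; intro; ring|].
    rewrite gsum_scal; ring.
  - rewrite gsum_plus, IHl. reflexivity.
Qed.

Lemma gsum_prod d M (f : Fin.t d -> nat -> R) :
  gsum d M (fun g => fprod d (fun i => f i (g i))) = fprod d (fun i => lsum (map (f i) (seq 0 M))).
Proof.
  induction d; simpl; [reflexivity|].
  rewrite <- (IHd (fun i => f (Fin.FS i))), Rmult_comm, <- lsum_map_scal.
  f_equal. apply map_ext; intro g0. rewrite Rmult_comm, <- gsum_scal. reflexivity.
Qed.

(** * Finite covers of a cube by boxes *)

Lemma div_le_iff c x y : 0 < c -> (x / c <= y <-> x <= c * y).
Proof.
  intro Hc. replace x with (c * (x / c)) at 2 by (field; lra).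
  split; intro H; [apply Rmult_le_compat_l|apply Rmult_le_reg_l with c]; lra.
Qed.

Lemma le_div_iff c x y : 0 < c -> (x <= y / c <-> c * x <= y).
Proof.
  intro Hc. replace y with (c * (y / c)) at 2 by (field; lra).
  split; intro H; [apply Rmult_le_compat_l|apply Rmult_le_reg_l with c]; lra.
Qed.

Lemma lt_div_iff c x y : 0 < c -> (x < y / c <-> c * x < y).
Proof.
  intro Hc. replace y with (c * (y / c)) at 2 by (field; lra).
  split; intro H; [apply Rmult_lt_compat_l|apply Rmult_lt_reg_l with c]; lra.
Qed.

Definition ind_interval (a b t : R) : R :=
  if Rle_dec a t then if Rle_dec t b then 1 else 0 else 0.

Lemma ind_interval_nonneg a b t : 0 <= ind_interval a b t.
Proof. unfold ind_interval; repeat destruct Rle_dec; lra. Qed.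

Lemma count_integers_in_interval a b M :
  lsum (map (fun g => ind_interval a b (INR g)) (seq 0 M)) <= Rmax 0 (Rmin b (INR M - 1) - a + 1).
Proof.
  induction M; [apply Rmax_l|].
  rewrite lsum_seq_S, S_INR. simpl (0 + M)%nat.
  replace (INR M + 1 - 1) with (INR M) by ring. pose proof (pos_INR M).
  revert IHM. unfold ind_interval, Rmax, Rmin. repeat destruct Rle_dec; intros; lra.
Qed.

Lemma count_grid_in_interval a b q s M : a <= b -> 0 < s -> (0 < M)%nat ->
  lsum (map (fun g => ind_interval a b (q + s * INR g / INR M)) (seq 0 M)) <= INR M * (b - a) / s + 1.
Proof.
  intros Hab Hs HM. assert (HM' : 0 < INR M) by (apply lt_0_INR; auto).
  set (h := s / INR M). assert (Hh : 0 < h) by (apply Rdiv_lt_0_compat; auto).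
  replace (map _ (seq 0 M))
    with (map (fun g => ind_interval ((a - q) / h) ((b - q) / h) (INR g)) (seq 0 M)).
  2: { apply map_ext; intro g. unfold ind_interval.
       replace (q + s * INR g / INR M) with (q + h * INR g) by (unfold h; field; lra).
       assert (E1 : a <= q + h * INR g <-> (a - q) / h <= INR g) by (rewrite div_le_iff; lra).
       assert (E2 : q + h * INR g <= b <-> INR g <= (b - q) / h) by (rewrite le_div_iff; lra).
       destruct (Rle_dec a (q + h * INR g)), (Rle_dec ((a - q) / h) (INR g)),
         (Rle_dec (q + h * INR g) b), (Rle_dec (INR g) ((b - q) / h)); tauto. }
  eapply Rle_trans; [apply count_integers_in_interval|].
  assert ((a - q) / h <= (b - q) / h)
    by (apply Rmult_le_compat_r; [left; apply Rinv_0_lt_compat|]; lra).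
  assert ((b - q) / h - (a - q) / h = INR M * (b - a) / s) by (unfold h; field; lra).
  unfold Rmax, Rmin. repeat destruct Rle_dec; lra.
Qed.

Definition inbox {d} (a b y : pt d) : Prop := forall i, a i <= y i <= b i.

Definition vol {d} (B : pt d * pt d) : R := fprod d (fun i => snd B i - fst B i).

Definition box_ind {d} (B : pt d * pt d) (y : pt d) : R :=
  fprod d (fun i => ind_interval (fst B i) (snd B i) (y i)).

(* the error term in counting grid points of mesh [s / M] in [B], up to the factor [1/M] *)
Definition box_slack {d} (s : R) (B : pt d * pt d) : R :=
  2 ^ d * fprod d (fun i => (snd B i - fst B i) / s + 1).

Section GridCount.
Variables (d : nat) (q : pt d) (s : R) (M : nat).
Hypotheses (Hs : 0 < s) (HM : (0 < M)%nat).

Definition grid_point (g : Fin.t d -> nat) : pt d := fun i => q i + s * INR (g i) / INR M.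

(* A side of length [l] contains at most [M l / s + 1] grid coordinates. *)
Lemma box_grid_count (B : pt d * pt d) : (forall i, fst B i <= snd B i) ->
  gsum d M (fun g => box_ind B (grid_point g)) <=
  INR M ^ d * (vol B / s ^ d + / INR M * box_slack s B).
Proof.
  intro Hab. assert (HM' : 0 < INR M) by (apply lt_0_INR; auto).
  unfold box_ind, grid_point.
  rewrite (gsum_prod d M (fun i g => ind_interval (fst B i) (snd B i) (q i + s * INR g / INR M))).
  eapply Rle_trans.
  { apply fprod_le. intro i. split.
    - apply lsum_map_nonneg; intros; apply ind_interval_nonneg.
    - apply count_grid_in_interval; auto. }
  replace (fprod d (fun i => INR M * (snd B i - fst B i) / s + 1)) with
    (INR M ^ d * fprod d (fun i => (snd B i - fst B i) / s + / INR M)).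
  2: { rewrite <- fprod_const, <- fprod_mult. f_equal.
       apply functional_extensionality; intro i. field; lra. }
  apply Rmult_le_compat_l; [apply pow_le; lra|].
  replace (vol B / s ^ d) with (fprod d (fun i => (snd B i - fst B i) / s)).
  2: { unfold vol, Rdiv. rewrite fprod_mult, fprod_const, pow_inv. reflexivity. }
  apply fprod_add_le.
  - intro i. specialize (Hab i). apply Rmult_le_pos; [lra|left; apply Rinv_0_lt_compat; lra].
  - split; [left; apply Rinv_0_lt_compat; lra|].
    rewrite <- Rinv_1. apply Rinv_le_contravar; [lra|]. apply (le_INR 1); auto.
Qed.

Lemma cover_grid_count (BL : list (pt d * pt d)) :
  (forall B, In B BL -> forall i, fst B i <= snd B i) ->
  (forall y, inbox q (fun i => q i + s) y -> exists B, In B BL /\ inbox (fst B) (snd B) y) ->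
  1 <= lsum (map vol BL) / s ^ d + / INR M * lsum (map (box_slack s) BL).
Proof.
  intros Hab Hcov. assert (HM' : 0 < INR M) by (apply lt_0_INR; auto).
  assert (HMd : 0 < INR M ^ d) by (apply pow_lt; auto).
  apply (Rmult_le_reg_l (INR M ^ d)); auto. rewrite Rmult_1_r.
  assert (Hpoints : INR M ^ d <= gsum d M (fun g => lsum (map (fun B => box_ind B (grid_point g)) BL))).
  { replace (INR M ^ d) with (gsum d M (fun g => fprod d (fun i => (fun _ _ => 1) i (g i)))).
    2: { rewrite (gsum_prod d M (fun _ _ => 1)), <- fprod_const. f_equal.
         apply functional_extensionality; intro i. rewrite lsum_map_const, length_seq; ring. }
    apply gsum_le. intros g Hg. rewrite fprod_one by auto.
    destruct (Hcov (grid_point g)) as [B [HB Hin]].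
    { intro i. unfold grid_point. pose proof (lt_INR _ _ (Hg i)). pose proof (pos_INR (g i)).
      assert (0 <= s * INR (g i) / INR M <= s); [|lra].
      split; [apply Rmult_le_pos; [nra|left; apply Rinv_0_lt_compat; lra]|].
      apply div_le_iff; nra. }
    replace 1 with (box_ind B (grid_point g)).
    2: { apply fprod_one. intro i. unfold ind_interval. destruct (Hin i).
         repeat destruct Rle_dec; lra. }
    apply (lsum_map_member_le (fun B => box_ind B (grid_point g))); auto.
    intros; apply fprod_nonneg; intro; apply ind_interval_nonneg. }
  rewrite gsum_lsum in Hpoints. eapply Rle_trans; [exact Hpoints|].
  eapply Rle_trans; [apply lsum_map_le; intros B HB; exact (box_grid_count B (Hab B HB))|].
  rewrite lsum_map_scal, lsum_map_plus, lsum_map_scal.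
  replace (lsum (map (fun B => vol B / s ^ d) BL)) with (lsum (map vol BL) / s ^ d);
    [right; reflexivity|].
  unfold Rdiv. rewrite Rmult_comm, <- lsum_map_scal. f_equal. apply map_ext; intro; ring.
Qed.
End GridCount.

Lemma le_of_le_add_inv_INR a b C : 0 <= C -> (forall M, (0 < M)%nat -> a <= b + / INR M * C) -> a <= b.
Proof.
  intros HC H. destruct (Rle_dec a b) as [|Hab]; [auto|exfalso].
  destruct (archimed_cor1 ((a - b) / (C + 1))) as [M [HM1 HM2]].
  { apply Rdiv_lt_0_compat; lra. }
  specialize (H M HM2).
  assert (HMp : 0 < / INR M) by (apply Rinv_0_lt_compat, lt_0_INR; auto).
  apply (Rmult_lt_compat_r (C + 1)) in HM1; [|lra].
  replace ((a - b) / (C + 1) * (C + 1)) with (a - b) in HM1 by (field; lra).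
  nra.
Qed.

Lemma cover_volume d (q : pt d) (s : R) (BL : list (pt d * pt d)) : 0 < s ->
  (forall B, In B BL -> forall i, fst B i <= snd B i) ->
  (forall y, inbox q (fun i => q i + s) y -> exists B, In B BL /\ inbox (fst B) (snd B) y) ->
  s ^ d <= lsum (map vol BL).
Proof.
  intros Hs Hab Hcov. assert (Hsd : 0 < s ^ d) by (apply pow_lt; auto).
  rewrite <- (Rmult_1_r (s ^ d)). apply le_div_iff; auto.
  apply (le_of_le_add_inv_INR _ _ (lsum (map (box_slack s) BL))).
  - apply lsum_map_nonneg. intros B HB. apply Rmult_le_pos; [apply pow_le; lra|].
    apply fprod_nonneg. intro i. specialize (Hab B HB i).
    assert (0 <= (snd B i - fst B i) / s)
      by (apply Rmult_le_pos; [lra|left; apply Rinv_0_lt_compat; lra]).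
    lra.
  - intros M HM. apply (cover_grid_count d q); auto.
Qed.

(** * Compactness of closed boxes *)

Lemma fin_common_radius d (P : Fin.t d -> R -> Prop) :
  (forall i, exists e, 0 < e /\ P i e) ->
  (forall i e e', 0 < e' <= e -> P i e -> P i e') ->
  exists e, 0 < e /\ forall i, P i e.
Proof.
  induction d; intros H1 H2.
  - exists 1; split; [lra|]. intro i; apply (Fin.case0 (fun i => P i 1)).
  - destruct (IHd (fun j e => P (Fin.FS j) e)) as [e1 [He1 Hp1]].
    + intro i; apply H1.
    + intros; eapply H2; eauto.
    + destruct (H1 Fin.F1) as [e0 [He0 Hp0]].
      exists (Rmin e0 e1); split; [apply Rmin_glb_lt; auto|].
      intro i; pattern i; apply Fin.caseS'.
      * eapply H2; [|exact Hp0]. split; [apply Rmin_glb_lt; auto|apply Rmin_l].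
      * intro j; eapply H2; [|exact (Hp1 j)]. split; [apply Rmin_glb_lt; auto|apply Rmin_r].
Qed.

Lemma list_pos_lower_bound (l : list R) : (forall x, In x l -> 0 < x) ->
  exists m, 0 < m /\ forall x, In x l -> m <= x.
Proof.
  induction l as [|a l IH]; intro H; [exists 1; split; [lra|intros _ []]|].
  destruct (IH (fun x Hx => H x (or_intror Hx))) as [m [Hm Hml]].
  exists (Rmin a m). split; [apply Rmin_glb_lt; auto; apply H; left; auto|].
  intros x [<-|Hx]; [apply Rmin_l|]. eapply Rle_trans; [apply Rmin_r|auto].
Qed.

Lemma open_ball_sup {d} (y0 : pt d) (de : R) : is_open d (fun y => forall j, Rabs (y j - y0 j) < de).
Proof.
  intros y Hy.
  destruct (fin_common_radius d (fun j e => forall z, Rabs (z - y j) < e -> Rabs (z - y0 j) < de))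
    as [e [He Hp]].
  - intro j. exists (de - Rabs (y j - y0 j)). split; [specialize (Hy j); lra|].
    intros z Hz. replace (z - y0 j) with ((z - y j) + (y j - y0 j)) by ring.
    eapply Rle_lt_trans; [apply Rabs_triang|]. lra.
  - intros j e1 e2 [He2 Hle] H z Hz. apply H. lra.
  - exists e. split; [exact He|]. intros z Hz j. exact (Hp j _ (Hz j)).
Qed.

Lemma open_box {d} (a b : pt d) : is_open d (fun y => forall i, a i < y i < b i).
Proof.
  intros y Hy.
  destruct (fin_common_radius d (fun j e => forall z, Rabs (z - y j) < e -> a j < z < b j))
    as [e [He Hp]].
  - intro j. exists (Rmin (y j - a j) (b j - y j)). specialize (Hy j).
    split; [apply Rmin_glb_lt; lra|].
    intros z Hz. apply Rabs_def2 in Hz.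
    pose proof (Rmin_l (y j - a j) (b j - y j)). pose proof (Rmin_r (y j - a j) (b j - y j)). lra.
  - intros j e1 e2 [He2 Hle] H z Hz. apply H. lra.
  - exists e. split; [exact He|]. intros z Hz j. exact (Hp j _ (Hz j)).
Qed.

Lemma interval_compact (a b : R) (rho : R -> R) : (forall t, 0 < rho t) ->
  exists l : list R, forall y, a <= y <= b -> exists t, In t l /\ a <= t <= b /\ Rabs (y - t) < rho t.
Proof.
  intro Hrho.
  set (fam := mkfamily (fun t => a <= t <= b) (fun t y => a <= t <= b /\ Rabs (y - t) < rho t)
     (fun t H => match H with ex_intro _ _ H' => proj1 H' end)).
  destruct (compact_P3 a b fam) as [D [Hcov [l Hl]]].
  - split.
    + intros y Hy. exists y. simpl. split; auto. rewrite Rminus_diag, Rabs_R0; auto.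
    + intros t y [Ht Hy]. exists (mkposreal _ (proj2 (Rlt_0_minus _ _) Hy)). intros z Hz.
      unfold disc in Hz; simpl in *. split; auto.
      replace (z - t) with ((z - y) + (y - t)) by ring.
      eapply Rle_lt_trans; [apply Rabs_triang|]. lra.
  - exists l. intros y Hy. destruct (Hcov y Hy) as [t [[Ht1 Ht2] Ht3]].
    exists t. split; [apply Hl; simpl; split; auto|auto].
Qed.

Definition pcons {d} (t : R) (y : pt d) : pt (S d) := fun i => Fin.caseS' i (fun _ => R) t y.

Lemma pcons_eta {d} (z : pt (S d)) : pcons (z Fin.F1) (fun j => z (Fin.FS j)) = z.
Proof. apply functional_extensionality; intro i. pattern i; apply Fin.caseS'; reflexivity. Qed.

Definition box_compact_in (d : nat) : Prop :=
  forall (a b : pt d) (I : Type) (O : I -> pt d -> Prop),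
    (forall i, is_open d (O i)) -> (forall y, inbox a b y -> exists i, O i y) ->
    exists L : list I, forall y, inbox a b y -> exists i, In i L /\ O i y.

Section Tube.
Variable d : nat.
Hypothesis compact_d : box_compact_in d.
Variables (a' b' : pt d) (I : Type) (O : I -> pt (S d) -> Prop).
Hypothesis HO : forall i, is_open (S d) (O i).

Lemma tube_lemma (t : R) : (forall y', inbox a' b' y' -> exists i, O i (pcons t y')) ->
  exists delta L, 0 < delta /\
    forall u y', Rabs (u - t) < delta -> inbox a' b' y' -> exists i, In i L /\ O i (pcons u y').
Proof.
  intro Hslice.
  (* Cover the slice by half-size balls [B(y0, de)] such that [(t - 2 de, t + 2 de) x B(y0, 2 de)]
     lies in some [O i]; the least [de] of a finite subcover is the width of the tube. *)
  set (O' := fun (p : I * R * pt d) (y' : pt d) => let '(i, de, y0) := p in 0 < de /\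
    (forall u z', Rabs (u - t) < 2 * de -> (forall j, Rabs (z' j - y0 j) < 2 * de) ->
       O i (pcons u z')) /\
    (forall j, Rabs (y' j - y0 j) < de)).
  destruct (compact_d a' b' _ O') as [L' HL'].
  - intros [[i de] y0] y' [Hde [Hq Hy']].
    destruct (open_ball_sup y0 de y' Hy') as [e [He He']].
    exists e; split; auto. intros z Hz. simpl. auto.
  - intros y' Hy'. destruct (Hslice y' Hy') as [i Hi].
    destruct (HO i _ Hi) as [rho [Hrho Hr]].
    exists (i, rho / 2, y'). simpl. split; [lra|]. split.
    + intros u z' Hu Hz. apply Hr. intro i0; pattern i0; apply Fin.caseS'; simpl; [lra|].
      intro j. specialize (Hz j). lra.
    + intro j. rewrite Rminus_diag, Rabs_R0. lra.
  - set (rad := fun p : I * R * pt d => let de := snd (fst p) in if Rlt_dec 0 de then de else 1).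
    destruct (list_pos_lower_bound (map rad L')) as [delta [Hdelta Hmin]].
    { intros r Hr. apply in_map_iff in Hr. destruct Hr as [p [<- _]].
      unfold rad. destruct Rlt_dec; lra. }
    exists delta, (map (fun p => fst (fst p)) L'). split; [exact Hdelta|].
    intros u y' Hu Hy'. destruct (HL' y' Hy') as [[[i de] y0] [Hin [Hde [Hq Hy0]]]].
    exists i. split; [apply in_map_iff; exists (i, de, y0); auto|].
    assert (delta <= de).
    { replace de with (rad (i, de, y0)) by (unfold rad; simpl; destruct Rlt_dec; lra).
      apply Hmin, in_map; auto. }
    apply Hq; [lra|]. intro j; specialize (Hy0 j); lra.
Qed.
End Tube.

Lemma box_compact d : box_compact_in d.
Proof.
  induction d as [|d IHd]; intros a b I O Hop Hcov.
  - destruct (Hcov (fun i => Fin.case0 _ i)) as [i Hi].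
    + intro i; exact (Fin.case0 (fun i => a i <= Fin.case0 (fun _ => R) i <= b i) i).
    + exists [i]. intros y _. exists i. split; [left; auto|].
      replace y with (fun i : Fin.t 0 => Fin.case0 (fun _ => R) i); [exact Hi|].
      apply functional_extensionality; intro j; apply (Fin.case0 (fun j => _ = y j) j).
  - set (a' := fun j => a (Fin.FS j)). set (b' := fun j => b (Fin.FS j)).
    assert (Htube : forall t, exists p : R * list I, 0 < fst p /\
      (a Fin.F1 <= t <= b Fin.F1 -> forall u y', Rabs (u - t) < fst p -> inbox a' b' y' ->
         exists i, In i (snd p) /\ O i (pcons u y'))).
    { intro t. destruct (classic (a Fin.F1 <= t <= b Fin.F1)) as [Ht|Ht].
      - destruct (tube_lemma d IHd a' b' I O Hop t) as [delta [L [Hdelta HL]]].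
        { intros y' Hy'. apply Hcov. intro i; pattern i; apply Fin.caseS'; [exact Ht|apply Hy']. }
        exists (delta, L); auto.
      - exists (1, @nil I); simpl; split; [lra|]. intros; contradiction. }
    destruct (functional_choice _ Htube) as [F HF].
    destruct (interval_compact (a Fin.F1) (b Fin.F1) (fun t => fst (F t))) as [T HT].
    { intro t; apply HF. }
    exists (flat_map (fun t => snd (F t)) T). intros y Hy.
    destruct (HT (y Fin.F1) (Hy Fin.F1)) as [t [Hin [Hrt Hd]]].
    destruct (proj2 (HF t) Hrt (y Fin.F1) (fun j => y (Fin.FS j)) Hd) as [i [Hi HOi]].
    { intro j; apply (Hy (Fin.FS j)). }
    exists i. split; [apply in_flat_map; exists t; auto|].
    rewrite pcons_eta in HOi. exact HOi.
Qed.

(** * Comparison of a norm with the sup norm *)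

Fixpoint fin_enum (d : nat) : list (Fin.t d) :=
  match d with O => [] | S d' => Fin.F1 :: map Fin.FS (fin_enum d') end.

Lemma fin_enum_complete d (i : Fin.t d) : In i (fin_enum d).
Proof. induction i; simpl; [left; auto|right]. apply in_map; auto. Qed.

Definition basis_vec {d} (j : Fin.t d) : pt d := fun i => if Fin.eq_dec i j then 1 else 0.

Definition restrict {d} (v : pt d) (l : list (Fin.t d)) : pt d :=
  fun i => if in_dec Fin.eq_dec i l then v i else 0.

Section Norm.
Variables (d : nat) (N : pt d -> R).
Hypothesis hN : is_norm d N.

Lemma norm_nonneg v : 0 <= N v. Proof. apply hN. Qed.
Lemma norm_scal c v : N (pscal c v) = Rabs c * N v. Proof. apply hN. Qed.
Lemma norm_triang v w : N (padd v w) <= N v + N w. Proof. apply hN. Qed.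

Lemma norm_zero : N (fun _ => 0) = 0.
Proof.
  replace (fun _ : Fin.t d => 0) with (pscal 0 (fun _ : Fin.t d => 0))
    by (apply functional_extensionality; intro; unfold pscal; ring).
  rewrite norm_scal, Rabs_R0; ring.
Qed.

Lemma norm_psub_sym v w : N (psub v w) = N (psub w v).
Proof.
  replace (psub v w) with (pscal (-1) (psub w v))
    by (apply functional_extensionality; intro; unfold pscal, psub; ring).
  rewrite norm_scal, Rabs_left by lra. ring.
Qed.

Lemma norm_triang_rev v w : N v - N (psub v w) <= N w.
Proof.
  replace v with (padd w (psub v w)) at 1
    by (apply functional_extensionality; intro; unfold padd, psub; ring).
  pose proof (norm_triang w (psub v w)). lra.
Qed.

Lemma norm_restrict_le v rho l : (forall i, Rabs (v i) <= rho) ->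
  N (restrict v l) <= rho * lsum (map (fun j => N (basis_vec j)) l).
Proof.
  intro Hv. induction l as [|a l IH]; simpl.
  - replace (restrict v []) with (fun _ : Fin.t d => 0) by reflexivity. rewrite norm_zero; lra.
  - set (ca := if in_dec Fin.eq_dec a l then 0 else v a).
    replace (restrict v (a :: l)) with (padd (pscal ca (basis_vec a)) (restrict v l)).
    + eapply Rle_trans; [apply norm_triang|]. rewrite norm_scal.
      assert (Rabs ca <= rho).
      { unfold ca; destruct in_dec; [|apply (Hv a)].
        rewrite Rabs_R0. eapply Rle_trans; [apply Rabs_pos|apply (Hv a)]. }
      pose proof (norm_nonneg (basis_vec a)).
      assert (Rabs ca * N (basis_vec a) <= rho * N (basis_vec a)) by (apply Rmult_le_compat_r; auto).
      lra.
    + apply functional_extensionality; intro i. unfold padd, pscal, restrict, basis_vec, ca.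
      destruct (Fin.eq_dec i a) as [->|Hne].
      * destruct (in_dec Fin.eq_dec a (a :: l)) as [_|Hn]; [|exfalso; apply Hn; left; auto].
        destruct (in_dec Fin.eq_dec a l); ring.
      * destruct (in_dec Fin.eq_dec i l) as [H1|H1], (in_dec Fin.eq_dec i (a :: l)) as [H2|H2];
          try ring; [exfalso; apply H2; right; auto|].
        destruct H2 as [H2|H2]; [symmetry in H2|]; contradiction.
Qed.

Definition basis_norm_sum : R := lsum (map (fun j => N (basis_vec j)) (fin_enum d)).

Lemma basis_norm_sum_nonneg : 0 <= basis_norm_sum.
Proof. apply lsum_map_nonneg. intros; apply norm_nonneg. Qed.

Lemma norm_le_sup_bound v rho : (forall i, Rabs (v i) <= rho) -> N v <= rho * basis_norm_sum.
Proof.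
  intro Hv. replace v with (restrict v (fin_enum d)) at 1; [apply norm_restrict_le; auto|].
  apply functional_extensionality; intro i. unfold restrict. destruct in_dec; auto.
  exfalso; apply n, fin_enum_complete.
Qed.

(* The face [{w | w j = 1, |w i| <= 1}] is compact and avoids 0, so [N] is bounded below on it:
   cover it by balls on which [N] stays above half its value at the centre. *)
Lemma norm_face_lower_bound j : exists m, 0 < m /\
  forall w, w j = 1 -> (forall i, Rabs (w i) <= 1) -> m <= N w.
Proof.
  set (a := fun i => if Fin.eq_dec i j then 1 else -1). set (b := fun _ : Fin.t d => 1).
  set (C := basis_norm_sum). assert (HC : 0 <= C) by apply basis_norm_sum_nonneg.
  set (O := fun (v w : pt d) => inbox a b v /\ forall i, Rabs (w i - v i) < N v / (2 * (C + 1))).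
  assert (Hpos : forall v, inbox a b v -> 0 < N v).
  { intros v Hv. destruct (norm_nonneg v) as [H|H]; auto. exfalso.
    pose proof (proj1 (proj2 hN) v (eq_sym H) j). specialize (Hv j). unfold a, b in Hv.
    destruct (Fin.eq_dec j j); [lra|contradiction]. }
  destruct (box_compact d a b (pt d) O) as [L HL].
  - intros v w [Hv Hw]. destruct (open_ball_sup v _ w Hw) as [e [He He']].
    exists e; split; auto. intros z Hz. split; auto.
  - intros w Hw. exists w. split; auto. intro i. rewrite Rminus_diag, Rabs_R0.
    specialize (Hpos w Hw). apply Rdiv_lt_0_compat; lra.
  - destruct (list_pos_lower_bound (map (fun v => if Rlt_dec 0 (N v) then N v / 2 else 1) L))
      as [m [Hm HmL]].
    { intros r Hr. apply in_map_iff in Hr. destruct Hr as [v [<- _]]. destruct Rlt_dec; lra. }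
    exists m. split; [exact Hm|]. intros w Hwj Hw.
    destruct (HL w) as [v [HvL [Hv Hwv]]].
    { intro i. unfold a, b. destruct (Fin.eq_dec i j) as [->|]; [rewrite Hwj; lra|].
      specialize (Hw i). unfold Rabs in Hw. destruct Rcase_abs in Hw; lra. }
    specialize (Hpos v Hv).
    assert (m <= N v / 2).
    { replace (N v / 2) with (if Rlt_dec 0 (N v) then N v / 2 else 1) by (destruct Rlt_dec; lra).
      apply HmL, in_map_iff. exists v; auto. }
    assert (N (psub w v) <= N v / (2 * (C + 1)) * C).
    { apply norm_le_sup_bound. intro i. left. apply Hwv. }
    assert (N v / (2 * (C + 1)) * C <= N v / 2).
    { replace (N v / (2 * (C + 1)) * C) with (N v / 2 * (C / (C + 1))) by (field; lra).
      rewrite <- (Rmult_1_r (N v / 2)) at 2. apply Rmult_le_compat_l; [lra|].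
      apply div_le_iff; lra. }
    pose proof (norm_triang_rev v w). rewrite norm_psub_sym in H2. lra.
Qed.

Lemma list_argmax {A} (f : A -> R) (l : list A) (a : A) : In a l ->
  exists j, In j l /\ forall i, In i l -> f i <= f j.
Proof.
  revert a; induction l as [|x l IH]; intros a0 Ha; [contradiction|].
  destruct l as [|y l'].
  - exists x. split; [left; auto|]. intros i [<-|[]]; lra.
  - destruct (IH y (or_introl eq_refl)) as [j [Hj Hmax]].
    destruct (Rle_dec (f x) (f j)).
    + exists j. split; [right; auto|]. intros i [<-|Hi]; auto.
    + exists x. split; [left; auto|]. intros i [<-|Hi]; [lra|]. specialize (Hmax i Hi). lra.
Qed.

Lemma coord_le_norm : exists c, 0 < c /\ forall v i, c * Rabs (v i) <= N v.
Proof.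
  destruct (fin_common_radius d
    (fun j m => forall w, w j = 1 -> (forall i, Rabs (w i) <= 1) -> m <= N w)) as [m [Hm Hmw]].
  - apply norm_face_lower_bound.
  - intros j e e' He H w H1 H2. specialize (H w H1 H2). lra.
  - exists m. split; auto. intros v i.
    destruct (list_argmax (fun i => Rabs (v i)) (fin_enum d) i (fin_enum_complete d i)) as [j [_ Hj]].
    assert (Hji : forall i', Rabs (v i') <= Rabs (v j)) by (intro i'; apply Hj, fin_enum_complete).
    destruct (Req_dec (v j) 0) as [H0|H0].
    + specialize (Hji i). rewrite H0, Rabs_R0 in Hji. pose proof (Rabs_pos (v i)).
      pose proof (norm_nonneg v). nra.
    + set (w := pscal (/ v j) v).
      assert (Hw : m <= N w).
      { apply (Hmw j); unfold w, pscal; [field; auto|].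
        intro i'. rewrite Rabs_mult, Rabs_inv.
        assert (0 < Rabs (v j)) by (apply Rabs_pos_lt; auto).
        apply (Rmult_le_reg_l (Rabs (v j))); auto. rewrite <- Rmult_assoc, Rinv_r by lra.
        specialize (Hji i'). lra. }
      replace v with (pscal (v j) w) at 2
        by (apply functional_extensionality; intro; unfold w, pscal; field; auto).
      rewrite norm_scal. specialize (Hji i). pose proof (Rabs_pos (v i)). nra.
Qed.

End Norm.

(** * A sequence of radii in P_d *)

Fixpoint lin_search (P : nat -> nat) (n fuel i : nat) : nat :=
  match fuel with
  | O => i
  | S f => if Nat.leb n (P i) then i else lin_search P n f (S i)
  end.

Lemma lin_search_spec P n fuel i : (n <= P (i + fuel))%nat ->
  (n <= P (lin_search P n fuel i))%nat /\ (i <= lin_search P n fuel i)%nat /\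
  forall i', (i <= i' < lin_search P n fuel i)%nat -> (P i' < n)%nat.
Proof.
  revert i; induction fuel; intros i H; simpl.
  - rewrite Nat.add_0_r in H. repeat split; auto. intros; lia.
  - destruct (Nat.leb n (P i)) eqn:E.
    + apply Nat.leb_le in E. repeat split; auto. intros; lia.
    + apply Nat.leb_gt in E. destruct (IHfuel (S i)) as [H1 [H2 H3]].
      { replace (S i + fuel)%nat with (i + S fuel)%nat by lia. auto. }
      repeat split; auto; [lia|]. intros i' Hi'.
      destruct (Nat.eq_dec i' i) as [->|]; auto. apply H3; lia.
Qed.

Lemma inv2_pow_le a b : (a <= b)%nat -> (/2) ^ b <= (/2) ^ a.
Proof.
  intro H. replace b with (a + (b - a))%nat by lia. rewrite pow_add.
  assert (0 < (/2) ^ a) by (apply pow_lt; lra).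
  assert ((/2) ^ (b - a) <= 1) by (rewrite <- (pow1 (b - a)); apply pow_incr; lra).
  nra.
Qed.

Lemma INR_unbounded x : exists n : nat, x < INR n.
Proof.
  destruct (archimed x) as [H1 _]. exists (Z.to_nat (up x)).
  destruct (Z_le_gt_dec 0 (up x)).
  - rewrite INR_IZR_INZ, Z2Nat.id by lia; lra.
  - assert (IZR (up x) < 0) by (apply IZR_lt; lia). pose proof (pos_INR (Z.to_nat (up x))). lra.
Qed.

Lemma incr_nat_seq_ge (f : nat -> nat) : (forall m, (f m < f (S m))%nat) ->
  forall m, (f 0 + m <= f m)%nat.
Proof. intros Hf m. induction m; [lia|]. specialize (Hf m). lia. Qed.

Section Radii.
Variable d : nat.
Hypothesis hd : (1 <= d)%nat.
Variable H : nat -> nat.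
Hypothesis H_incr : forall m, (H m < H (S m))%nat.
Variable c : R.
Hypothesis hc : 0 < c.

Definition block_end (m : nat) : nat := (2 ^ (d * H m))%nat.

Lemma H_mono m m' : (m <= m')%nat -> (H m <= H m')%nat.
Proof. induction 1 as [|m' _ IH]; [lia|]. pose proof (H_incr m'). lia. Qed.

Lemma block_end_gt m : (m < block_end m)%nat.
Proof.
  unfold block_end. pose proof (Nat.pow_gt_lin_r 2 (H m) ltac:(lia)).
  pose proof (incr_nat_seq_ge H H_incr m).
  pose proof (Nat.pow_le_mono_r 2 (H m) (d * H m) ltac:(lia) ltac:(nia)). lia.
Qed.

Lemma block_end_double m : (2 * block_end m <= block_end (S m))%nat.
Proof.
  unfold block_end. pose proof (H_incr m).
  replace (d * H (S m))%nat with (S (d * H m) + (d * H (S m) - S (d * H m)))%nat by nia.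
  rewrite Nat.pow_add_r, Nat.pow_succ_r'.
  pose proof (Nat.pow_nonzero 2 (d * H (S m) - S (d * H m)) ltac:(lia)). nia.
Qed.

Lemma block_end_mono m m' : (m <= m')%nat -> (block_end m <= block_end m')%nat.
Proof. induction 1 as [|m' _ IH]; [lia|]. pose proof (block_end_double m'). lia. Qed.

(* the least [m] with [n <= block_end m] *)
Definition block (n : nat) : nat := lin_search block_end n n 0.

Lemma block_spec n :
  (n <= block_end (block n))%nat /\ forall m, (m < block n)%nat -> (block_end m < n)%nat.
Proof.
  destruct (lin_search_spec block_end n n 0) as [H1 [_ H3]]; [simpl; pose proof (block_end_gt n); lia|].
  split; auto. intros m Hm. apply H3. unfold block in Hm. lia.
Qed.

Lemma block_mono n n' : (n <= n')%nat -> (block n <= block n')%nat.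
Proof.
  intro Hn. destruct (Nat.le_gt_cases (block n) (block n')) as [|Hlt]; auto.
  destruct (block_spec n) as [_ H2]. destruct (block_spec n') as [H3 _].
  specialize (H2 _ Hlt). lia.
Qed.

Lemma block_gt n m : (block_end m < n)%nat -> (m < block n)%nat.
Proof.
  intro Hn. destruct (Nat.le_gt_cases (block n) m) as [Hle|]; auto.
  destruct (block_spec n) as [H1 _]. pose proof (block_end_mono _ _ Hle). lia.
Qed.

Lemma block_eq n m : (block_end m < n <= block_end (S m))%nat -> block n = S m.
Proof.
  intros [H1 H2]. pose proof (block_gt n m H1). destruct (block_spec n) as [_ H3].
  destruct (Nat.le_gt_cases (block n) (S m)) as [|Hlt]; [lia|]. specialize (H3 _ Hlt). lia.
Qed.

Definition radius (n : nat) : R := c * (/2) ^ (H (block n)).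

Lemma radius_pos n : 0 < radius n.
Proof. unfold radius. apply Rmult_lt_0_compat; auto. apply pow_lt; lra. Qed.

Lemma radius_pow_d n : radius n ^ d = c ^ d / INR (block_end (block n)).
Proof.
  unfold radius, block_end. rewrite Rpow_mult_distr, pow_INR, <- pow_mult, Nat.mul_comm, pow_inv.
  simpl INR. replace (1 + 1) with 2 by ring. reflexivity.
Qed.

Lemma block_sum m : INR (S m) * c ^ d / 2 <= lsum (map (fun n => radius n ^ d) (seq 1 (block_end m))).
Proof.
  assert (Hcd : 0 < c ^ d) by (apply pow_lt; auto).
  induction m.
  - assert (HP0 : 0 < INR (block_end 0)) by (apply lt_0_INR; pose proof (block_end_gt 0); lia).
    rewrite (map_ext_in _ (fun _ => c ^ d / INR (block_end 0))), lsum_map_const, length_seq.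
    + replace (INR (block_end 0) * (c ^ d / INR (block_end 0))) with (c ^ d) by (field; lra).
      simpl; lra.
    + intros n Hn. apply in_seq in Hn. rewrite radius_pow_d. do 3 f_equal.
      destruct (block_spec n) as [_ H2]. destruct (block n); auto.
      specialize (H2 0%nat ltac:(lia)). lia.
  - pose proof (block_end_double m) as Hdouble. pose proof (block_end_gt (S m)).
    replace (block_end (S m)) with (block_end m + (block_end (S m) - block_end m))%nat at 1 by lia.
    rewrite seq_app, map_app, lsum_app.
    rewrite (map_ext_in _ (fun _ => c ^ d / INR (block_end (S m))) (seq (1 + block_end m) _)),
      lsum_map_const, length_seq.
    + rewrite minus_INR, S_INR by lia. apply le_INR in Hdouble. rewrite mult_INR in Hdouble.
      set (P := INR (block_end m)) in *. set (P' := INR (block_end (S m))) in *.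
      assert (HP' : 0 < P') by (apply lt_0_INR; lia).
      assert ((P' - P) * (c ^ d / P') - c ^ d / 2 = c ^ d * (P' - 2 * P) / (2 * P')) by (field; lra).
      assert (0 <= c ^ d * (P' - 2 * P) / (2 * P'))
        by (apply Rmult_le_pos; [simpl in Hdouble; nra|left; apply Rinv_0_lt_compat; lra]).
      lra.
    + intros n Hn. apply in_seq in Hn. rewrite radius_pow_d, (block_eq n m); auto. lia.
Qed.

Lemma radius_in_Pd : in_Pd d radius.
Proof.
  split; [|split].
  - intros n _. apply Rmult_le_compat_l; [lra|]. apply inv2_pow_le, H_mono, block_mono; lia.
  - intros eps Heps.
    destruct (pow_lt_1_zero (/2) ltac:(rewrite Rabs_right; lra) (eps / c)) as [M0 HM0].
    { apply Rdiv_lt_0_compat; auto. }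
    exists (S (block_end M0)). intros n Hn. pose proof (block_gt n M0 ltac:(lia)).
    rewrite Rabs_right by (left; apply radius_pos). unfold radius.
    specialize (HM0 M0 (le_n _)). rewrite Rabs_right in HM0 by (left; apply pow_lt; lra).
    assert ((/2) ^ H (block n) <= (/2) ^ M0)
      by (apply inv2_pow_le; pose proof (incr_nat_seq_ge H H_incr (block n)); lia).
    apply (Rmult_lt_compat_l c) in HM0; auto. replace (c * (eps / c)) with eps in HM0 by (field; lra).
    nra.
  - intro Mb. destruct (INR_unbounded (2 * Mb / c ^ d)) as [m Hm].
    assert (Hcd : 0 < c ^ d) by (apply pow_lt; auto).
    exists (block_end m - 1)%nat.
    rewrite sum_f_R0_lsum, <- (map_map S (fun n => radius n ^ d)), seq_shift.
    replace (S (block_end m - 1)) with (block_end m) by (pose proof (block_end_gt m); lia).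
    eapply Rlt_le_trans; [|apply block_sum]. rewrite S_INR.
    apply (Rmult_lt_compat_r (c ^ d)) in Hm; auto.
    replace (2 * Mb / c ^ d * c ^ d) with (2 * Mb) in Hm by (field; lra). nra.
Qed.
End Radii.

(** * Null sets and covers of a cube *)

Lemma box_enlarge_volume d (a b : pt d) delta : (forall i, a i <= b i) -> 0 < delta ->
  exists t, 0 < t /\ fprod d (fun i => (b i + t) - (a i - t)) <= fprod d (fun i => b i - a i) + delta.
Proof.
  intros Hab Hdelta.
  set (C := 2 ^ d * fprod d (fun i => b i - a i + 1)).
  assert (HC : 0 <= C).
  { apply Rmult_le_pos; [apply pow_le; lra|]. apply fprod_nonneg; intro i; specialize (Hab i); lra. }
  set (t := Rmin (1 / 2) (delta / (2 * (C + 1)))).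
  assert (Ht : 0 < t) by (apply Rmin_glb_lt; [lra|apply Rdiv_lt_0_compat; lra]).
  assert (Ht2 : t <= 1 / 2) by apply Rmin_l.
  assert (HtC : 2 * t * C <= delta).
  { assert (Ht' : t <= delta / (2 * (C + 1))) by apply Rmin_r.
    apply le_div_iff in Ht'; [|lra]. nra. }
  exists t. split; [exact Ht|].
  replace (fun i => b i + t - (a i - t)) with (fun i => (b i - a i) + 2 * t)
    by (apply functional_extensionality; intro; ring).
  eapply Rle_trans; [apply fprod_add_le; [intro i; specialize (Hab i); lra|lra]|].
  cbv beta. fold C. lra.
Qed.

Lemma lebesgue_null_open_cover d (A : pt d -> Prop) eps : lebesgue_null d A -> 0 < eps ->
  exists a b : nat -> pt d, (forall k i, a k i <= b k i) /\
    (forall y, A y -> exists k, forall i, a k i < y i < b k i) /\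
    forall n, lsum (map (fun k => fprod d (fun i => b k i - a k i)) (seq 0 n)) <= eps.
Proof.
  intros HA Heps. destruct (HA (eps / 2) ltac:(lra)) as [a [b [Hab [Hcov Hsum]]]].
  destruct (functional_choice (fun k t => 0 < t /\
      fprod d (fun i => (b k i + t) - (a k i - t)) <=
      fprod d (fun i => b k i - a k i) + eps * (/2) ^ (k + 2)))
    as [t Ht].
  { intro k. apply box_enlarge_volume; [apply Hab|]. apply Rmult_lt_0_compat; [lra|apply pow_lt; lra]. }
  exists (fun k i => a k i - t k), (fun k i => b k i + t k). split; [|split].
  - intros k i. specialize (Hab k i). specialize (Ht k). lra.
  - intros y Hy. destruct (Hcov y Hy) as [k Hk]. exists k.
    intro i. specialize (Hk i). specialize (Ht k). lra.
  - intro n. eapply Rle_trans; [apply lsum_map_le; intros k _; apply Ht|].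
    rewrite lsum_map_plus, lsum_map_scal. pose proof (lsum_geometric 2 n) as Hg.
    assert (Hb : lsum (map (fun k => fprod d (fun i => b k i - a k i)) (seq 0 n)) <= eps / 2).
    { destruct n; [simpl; lra|]. rewrite <- sum_f_R0_lsum. apply Hsum. }
    simpl in Hg. nra.
Qed.

Lemma list_nat_bound (l : list nat) : exists K, forall n, In n l -> (n < K)%nat.
Proof.
  induction l as [|a l [K HK]]; [exists 0%nat; intros _ []|].
  exists (S (Nat.max a K)). intros n [<-|Hn]; [lia|]. specialize (HK n Hn). lia.
Qed.

(* Compactness turns the countable cover into a finite one, whose volume is then too small. *)
Lemma closed_cube_not_covered d (q : pt d) (s : R) (A : pt d -> Prop)
  (BL : nat -> list (pt d * pt d)) : 0 < s -> lebesgue_null d A ->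
  (forall m B, In B (BL m) -> forall i, fst B i <= snd B i) ->
  (forall M, lsum (map (fun m => lsum (map vol (BL m))) (seq 0 M)) <= s ^ d / 2) ->
  exists y, inbox q (fun i => q i + s) y /\ ~ A y /\
    forall m B, In B (BL m) -> ~ (forall i, fst B i < y i < snd B i).
Proof.
  intros Hs HA HBL Hsum. set (V := s ^ d). assert (HV : 0 < V) by (apply pow_lt; lra).
  destruct (lebesgue_null_open_cover d A (V / 4) HA ltac:(lra)) as [a [b [Hab [HcovA HsumA]]]].
  set (O := fun (ix : nat + (nat * (pt d * pt d))) (y : pt d) => match ix with
    | inl k => forall i, a k i < y i < b k i
    | inr (m, B) => In B (BL m) /\ forall i, fst B i < y i < snd B i end).
  apply NNPP. intro Hno.
  destruct (box_compact d q (fun i => q i + s) _ O) as [L HL].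
  - intros [k|[m B]]; [apply open_box|].
    intros y [HB Hy]. destruct (open_box _ _ y Hy) as [e [He He']].
    exists e; split; auto. intros z Hz; split; auto.
  - intros y Hy. apply NNPP; intro Hy'. apply Hno. exists y. split; [exact Hy|]. split.
    + intro HAy. destruct (HcovA y HAy) as [k Hk]. apply Hy'. exists (inl k). exact Hk.
    + intros m B HB HyB. apply Hy'. exists (inr (m, B)). simpl. auto.
  - set (idx := fun ix : nat + (nat * (pt d * pt d)) => match ix with inl k => k | inr (m, _) => m end).
    destruct (list_nat_bound (map idx L)) as [K HK].
    assert (Hvol : V <= lsum (map vol (map (fun k => (a k, b k)) (seq 0 K) ++ flat_map BL (seq 0 K)))).
    { apply (cover_volume d q); [exact Hs| |].
      - intros B HB i. apply in_app_or in HB. destruct HB as [HB|HB].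
        + apply in_map_iff in HB. destruct HB as [k [<- _]]. apply Hab.
        + apply in_flat_map in HB. destruct HB as [m [_ HB]]. exact (HBL m B HB i).
      - intros y Hy. destruct (HL y Hy) as [ix [Hix HO]].
        pose proof (HK (idx ix) (in_map idx _ _ Hix)) as HixK.
        destruct ix as [k|[m B]]; unfold idx in HixK; simpl in HO.
        + exists (a k, b k). split.
          { apply in_or_app; left. apply (in_map (fun k => (a k, b k))), in_seq; lia. }
          intro i. specialize (HO i). simpl. lra.
        + destruct HO as [HB HO]. exists B. split.
          * apply in_or_app; right. apply in_flat_map. exists m. split; [apply in_seq; lia|exact HB].
          * intro i. specialize (HO i). lra. }
    rewrite map_app, lsum_app, map_map, lsum_flat_map in Hvol.
    specialize (HsumA K). specialize (Hsum K). unfold vol at 1 in Hvol. simpl in Hvol.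
    fold V in Hsum. lra.
Qed.

(** * Dyadic cubes *)

Lemma powerRZ2_neg_nat (n : nat) : powerRZ 2 (- Z.of_nat n) = (/2) ^ n.
Proof. rewrite powerRZ_neg', <- pow_powerRZ, pow_inv. reflexivity. Qed.

Lemma powerRZ2_neg_add_nat j0 (J : nat) : powerRZ 2 (- (j0 + Z.of_nat J)) = powerRZ 2 (- j0) * (/2) ^ J.
Proof.
  replace (- (j0 + Z.of_nat J))%Z with (- j0 + - Z.of_nat J)%Z by lia.
  rewrite powerRZ_add, powerRZ2_neg_nat by lra. reflexivity.
Qed.

Lemma powerRZ2_neg_mul (d j : nat) : powerRZ 2 (- (Z.of_nat d * Z.of_nat j)) = ((/2) ^ j) ^ d.
Proof. rewrite <- Nat2Z.inj_mul, powerRZ2_neg_nat, <- pow_mult, Nat.mul_comm. reflexivity. Qed.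

Lemma in_cube_scaled {d} j (k : Fin.t d -> Z) y :
  in_cube j k y <-> forall i, IZR (k i) <= powerRZ 2 j * y i < IZR (k i) + 1.
Proof.
  assert (Hp : 0 < powerRZ 2 j) by (apply powerRZ_lt; lra).
  unfold in_cube. rewrite powerRZ_neg'.
  split; intros H i; specialize (H i);
    rewrite !(Rmult_comm (/ _)) in *; fold (Rdiv (IZR (k i)) (powerRZ 2 j)) in *;
    fold (Rdiv (IZR (k i) + 1) (powerRZ 2 j)) in *;
    rewrite div_le_iff, lt_div_iff in *; auto.
Qed.

Lemma floor_exists (r : R) : exists f : Z, IZR f <= r < IZR f + 1.
Proof. destruct (archimed r) as [H1 H2]. exists (up r - 1)%Z. rewrite minus_IZR. simpl. lra. Qed.

Lemma floor_scale_iff (Q k k' : Z) (u : R) : (0 < Q)%Z -> IZR k' <= IZR Q * u < IZR k' + 1 ->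
  (IZR k <= u < IZR k + 1 <-> (k * Q <= k' < k * Q + Q)%Z).
Proof.
  intros HQ [Hk1 Hk2]. apply IZR_lt in HQ. split.
  - intros [Hu1 Hu2].
    assert (Hlo : IZR (k * Q) < IZR (k' + 1)) by (rewrite mult_IZR, plus_IZR; nra).
    assert (Hhi : IZR k' < IZR (k * Q + Q)) by (rewrite plus_IZR, mult_IZR; nra).
    apply lt_IZR in Hlo, Hhi. lia.
  - intros Hk. assert (k * Q <= k' /\ k' + 1 <= k * Q + Q)%Z as [H1 H2] by lia.
    apply IZR_le in H1, H2. rewrite mult_IZR in H1. rewrite plus_IZR, plus_IZR, mult_IZR in H2.
    split; nra.
Qed.

Lemma dyadic_subcube {d} j0 (k : Fin.t d -> Z) (J : nat) z : in_cube j0 k z ->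
  exists k', in_cube (j0 + Z.of_nat J) k' z /\
    forall y, in_cube (j0 + Z.of_nat J) k' y -> in_cube j0 k y.
Proof.
  intro Hz. set (Q := (2 ^ Z.of_nat J)%Z).
  assert (HQ : (0 < Q)%Z) by (apply Z.pow_pos_nonneg; lia).
  assert (Hscale : forall t, powerRZ 2 (j0 + Z.of_nat J) * t = IZR Q * (powerRZ 2 j0 * t)).
  { intro t. rewrite powerRZ_add, <- pow_powerRZ, pow_IZR by lra. unfold Q. simpl. ring. }
  destruct (functional_choice (fun i f => IZR f <= powerRZ 2 (j0 + Z.of_nat J) * z i < IZR f + 1))
    as [k' Hk'].
  { intro i. apply floor_exists. }
  exists k'. split; [apply in_cube_scaled; exact Hk'|].
  intros y Hy. rewrite in_cube_scaled in Hy, Hz |- *. intro i.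
  specialize (Hk' i). specialize (Hy i). specialize (Hz i). rewrite Hscale in Hk', Hy.
  apply (floor_scale_iff Q _ _ _ HQ Hy). apply (floor_scale_iff Q _ _ _ HQ Hk'). exact Hz.
Qed.

(* The dyadic cube [(j, kp)] dilated by the factor 3 about its centre. *)
Definition enlarged_cube {d} (j : Z) (kp : Fin.t d -> Z) : pt d * pt d :=
  (fun i => powerRZ 2 (- j) * (IZR (kp i) - 1), fun i => powerRZ 2 (- j) * (IZR (kp i) + 2)).

Lemma vol_enlarged_cube {d} j (kp : Fin.t d -> Z) :
  vol (enlarged_cube j kp) = (3 * powerRZ 2 (- j)) ^ d.
Proof.
  unfold vol, enlarged_cube. simpl. rewrite <- fprod_const. f_equal.
  apply functional_extensionality; intro; ring.
Qed.

Lemma enlarged_cube_le {d} j (kp : Fin.t d -> Z) i :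
  fst (enlarged_cube j kp) i <= snd (enlarged_cube j kp) i.
Proof. simpl. pose proof (powerRZ_lt 2 (- j) ltac:(lra)). nra. Qed.

Lemma near_cube_in_enlarged {d} j (kp : Fin.t d -> Z) z y : in_cube j kp z ->
  (forall i, Rabs (y i - z i) < powerRZ 2 (- j)) ->
  forall i, fst (enlarged_cube j kp) i < y i < snd (enlarged_cube j kp) i.
Proof.
  intros Hz Hy i. specialize (Hz i). specialize (Hy i). apply Rabs_def2 in Hy. simpl. nra.
Qed.

(** * Sparse generations *)

Lemma increasing_choice (P : nat -> nat -> Prop) (lo : nat) :
  (forall m j0, exists j, (j0 <= j)%nat /\ P m j) ->
  exists J : nat -> nat, (lo <= J 0)%nat /\ (forall m, (J m < J (S m))%nat) /\ forall m, P m (J m).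
Proof.
  intro HP.
  destruct (functional_choice (fun (p : nat * nat) j => (snd p <= j)%nat /\ P (fst p) j)) as [G HG].
  { intros [m j0]. apply HP. }
  set (J := fix J m := match m with O => G (0%nat, lo) | S m' => G (m, S (J m')) end).
  exists J. split; [|split].
  - apply (HG (0%nat, lo)).
  - intro m. apply (HG (S m, S (J m))).
  - intros [|m]; [apply (HG (0%nat, lo))|apply (HG (S m, S (J m)))].
Qed.

Lemma sparse_generations {d} (x : nat -> pt d) j0 (k : Fin.t d -> Z) (eps : nat -> R) (lo : nat) :
  (forall m, 0 < eps m) ->
  (forall eps, 0 < eps -> forall J : nat, exists j : nat, (J <= j)%nat /\
     exists c : nat, is_card (in_M x j0 k j) c /\
       powerRZ 2 (- (Z.of_nat d * Z.of_nat j)) * INR c < eps) ->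
  exists (J : nat -> nat) (Lst : nat -> list (Fin.t d -> Z)),
    (lo <= J 0)%nat /\ (forall m, (J m < J (S m))%nat) /\
    (forall m kp, in_M x j0 k (J m) kp <-> In kp (Lst m)) /\
    forall m, powerRZ 2 (- (Z.of_nat d * Z.of_nat (J m))) * INR (length (Lst m)) < eps m.
Proof.
  intros Heps Hlim.
  destruct (increasing_choice (fun m j => exists l : list (Fin.t d -> Z),
      (forall kp, in_M x j0 k j kp <-> In kp l) /\
      powerRZ 2 (- (Z.of_nat d * Z.of_nat j)) * INR (length l) < eps m) lo) as [J [HJ0 [HJ HP]]].
  { intros m lo'. destruct (Hlim (eps m) (Heps m) lo') as [j [Hj [c [[l [_ [Hl Hin]]] Hc]]]].
    exists j. split; auto. exists l. rewrite Hl. auto. }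
  destruct (functional_choice _ HP) as [Lst HLst].
  exists J, Lst. split; [|split; [|split]]; auto; intro m; [apply HLst|apply HLst].
Qed.

Lemma enlarged_cubes_volume_sum d j0 (J : nat -> nat) (Lst : nat -> list (Fin.t d -> Z)) M :
  (forall m, powerRZ 2 (- (Z.of_nat d * Z.of_nat (J m))) * INR (length (Lst m)) <
             (/6) ^ d * (/2) ^ (m + 2)) ->
  lsum (map (fun m => lsum (map vol (map (enlarged_cube (j0 + Z.of_nat (J m))) (Lst m)))) (seq 0 M))
    <= (powerRZ 2 (- j0) / 2) ^ d / 2.
Proof.
  intro Hcount. set (S0 := powerRZ 2 (- j0)). assert (HS0 : 0 < S0) by (apply powerRZ_lt; lra).
  assert (HV : 0 < (S0 / 2) ^ d) by (apply pow_lt; lra).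
  eapply Rle_trans.
  - apply (lsum_map_le _ (fun m => (S0 / 2) ^ d * (/2) ^ (m + 2))). intros m _.
    rewrite map_map, (map_ext _ _ (vol_enlarged_cube _)), lsum_map_const.
    specialize (Hcount m). rewrite powerRZ2_neg_mul in Hcount.
    rewrite powerRZ2_neg_add_nat. fold S0.
    replace (INR (length (Lst m)) * (3 * (S0 * (/ 2) ^ J m)) ^ d)
      with ((3 * S0) ^ d * (((/ 2) ^ J m) ^ d * INR (length (Lst m))))
      by (rewrite !Rpow_mult_distr; ring).
    replace ((S0 / 2) ^ d * (/ 2) ^ (m + 2)) with ((3 * S0) ^ d * ((/6) ^ d * (/ 2) ^ (m + 2)))
      by (rewrite <- Rmult_assoc, <- Rpow_mult_distr; do 2 f_equal; field).
    apply Rmult_le_compat_l; [apply pow_le; lra|lra].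
  - rewrite lsum_map_scal. pose proof (lsum_geometric 2 M) as Hg. simpl in Hg. nra.
Qed.

Lemma absolute_generations j0 (J : nat -> nat) :
  (Z.to_nat (Z.abs j0) <= J 0)%nat -> (forall m, (J m < J (S m))%nat) ->
  exists H : nat -> nat, (forall m, Z.of_nat (H m) = (j0 + Z.of_nat (J m))%Z) /\
    forall m, (H m < H (S m))%nat.
Proof.
  intros HJ0 HJ. exists (fun m => Z.to_nat (j0 + Z.of_nat (J m))).
  assert (HH : forall m, Z.of_nat (Z.to_nat (j0 + Z.of_nat (J m))) = (j0 + Z.of_nat (J m))%Z).
  { intro m. pose proof (incr_nat_seq_ge J HJ m). lia. }
  split; [exact HH|]. intro m. pose proof (HH m). pose proof (HH (S m)). specialize (HJ m). lia.
Qed.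

(* lower corner of the middle half of the dyadic cube [(j0, k)] *)
Definition inner_corner {d} j0 (k : Fin.t d -> Z) : pt d :=
  fun i => powerRZ 2 (- j0) * (IZR (k i) + 1 / 4).

Lemma near_inner_cube_in_cube {d} j0 (k : Fin.t d -> Z) y z :
  inbox (inner_corner j0 k) (fun i => inner_corner j0 k i + powerRZ 2 (- j0) / 2) y ->
  (forall i, Rabs (z i - y i) < powerRZ 2 (- j0) / 8) -> in_cube j0 k z.
Proof.
  intros Hy Hz i. specialize (Hy i). specialize (Hz i). apply Rabs_def2 in Hz.
  unfold inner_corner in Hy. pose proof (powerRZ_lt 2 (- j0) ltac:(lra)). nra.
Qed.

Lemma approximant_subcube {d} (x : nat -> pt d) j0 (k : Fin.t d -> Z) (J n : nat) (y : pt d) :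
  (3 <= J)%nat -> (1 <= n)%nat -> INR n <= powerRZ 2 (Z.of_nat d * (j0 + Z.of_nat J)) ->
  inbox (inner_corner j0 k) (fun i => inner_corner j0 k i + powerRZ 2 (- j0) / 2) y ->
  (forall i, Rabs (y i - x n i) < powerRZ 2 (- (j0 + Z.of_nat J))) ->
  exists kp, in_M x j0 k J kp /\ forall i,
    fst (enlarged_cube (j0 + Z.of_nat J) kp) i < y i < snd (enlarged_cube (j0 + Z.of_nat J) kp) i.
Proof.
  intros HJ Hn1 Hn Hy Hclose.
  assert (Hw : powerRZ 2 (- (j0 + Z.of_nat J)) <= powerRZ 2 (- j0) / 8).
  { rewrite powerRZ2_neg_add_nat. pose proof (inv2_pow_le 3 J HJ) as Hpow. simpl in Hpow.
    pose proof (powerRZ_lt 2 (- j0) ltac:(lra)). nra. }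
  assert (Hxn : in_cube j0 k (x n)).
  { apply (near_inner_cube_in_cube j0 k y). exact Hy.
    intro i. specialize (Hclose i). rewrite <- Rabs_Ropp, Ropp_minus_distr. lra. }
  destruct (dyadic_subcube j0 k J (x n) Hxn) as [kp [Hkp Hnest]].
  exists kp. split; [split; [exact Hnest|exists n; auto]|].
  apply (near_cube_in_enlarged _ _ (x n)); auto.
Qed.

Theorem theorem8p5 (d : nat) (hd : (1 <= d)%nat) (N : pt d -> R)
  (hN : is_norm d N) (U : pt d -> Prop) (x : nat -> pt d)
  (hUo : is_open d U) (hUne : exists y, U y)
  (j0 : Z) (k : Fin.t d -> Z)
  (hsub : forall y, in_cube j0 k y -> U y)
  (hlim : forall eps, 0 < eps -> forall J : nat, exists j : nat, (J <= j)%nat /\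
     exists c : nat, is_card (in_M x j0 k j) c /\
       powerRZ 2 (- (Z.of_nat d * Z.of_nat j)) * INR c < eps) :
  ~ uniformly_eutaxic d N x U.
Proof.
  intro Heut.
  destruct (coord_le_norm d N hN) as [c [Hc Hcn]].
  (* [3^d / 6^d = 1 / 2^d]: the dilates cost [3^d], the middle half [Q] has volume [|lambda| / 2^d]. *)
  destruct (sparse_generations x j0 k (fun m => (/6) ^ d * (/2) ^ (m + 2)) (Z.to_nat (Z.abs j0) + 3))
    as [J [Lst [HJ0 [HJ [HLst Hcount]]]]]; auto.
  { intro m. apply Rmult_lt_0_compat; apply pow_lt; lra. }
  destruct (absolute_generations j0 J) as [H [HH H_incr]]; [lia|exact HJ|].
  pose proof (powerRZ_lt 2 (- j0) ltac:(lra)) as Hside.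
  destruct (closed_cube_not_covered d (inner_corner j0 k) (powerRZ 2 (- j0) / 2) _
    (fun m => map (enlarged_cube (j0 + Z.of_nat (J m))) (Lst m)) ltac:(lra)
    (Heut _ (radius_in_Pd d hd H H_incr c Hc))) as [y [Hy [HyA Hybox]]].
  - intros m B HB i. apply in_map_iff in HB. destruct HB as [kp [<- _]]. apply enlarged_cube_le.
  - intro M. apply enlarged_cubes_volume_sum, Hcount.
  - apply HyA. split.
    { apply hsub, (near_inner_cube_in_cube j0 k y); [exact Hy|].
      intro i. rewrite Rminus_diag, Rabs_R0. lra. }
    intro Happ. destruct (Happ 1%nat) as [n [_ [Hn1 Hclose]]].
    set (m := block d H n).
    destruct (approximant_subcube x j0 k (J m) n y) as [kp [HkpM Hin]]; auto.
    + pose proof (incr_nat_seq_ge J HJ m). lia.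
    + destruct (block_spec d hd H H_incr n) as [Hn _]. apply le_INR in Hn.
      unfold block_end in Hn. rewrite pow_INR, pow_powerRZ, Nat2Z.inj_mul, HH in Hn. exact Hn.
    + intro i. rewrite <- HH, powerRZ2_neg_nat. apply (Rmult_lt_reg_l c); auto.
      specialize (Hcn (psub y (x n)) i). unfold radius in Hclose. fold m in Hclose.
      unfold psub in Hcn at 1. lra.
    + apply (Hybox m (enlarged_cube (j0 + Z.of_nat (J m)) kp)); [|exact Hin].
      apply in_map, HLst, HkpM.
Qed.
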